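(* Let $p$ be an odd prime, $M$ a Bousfield module and $x\in M$. There is some $k\ge1$ such that $\Phi_nx\equiv0\pmod p$ (i.e. $\Phi_nx\in p\,Rx$) for all $n\ge p^k(p-1)$.
   Context: $\mathbb{Z}_{(p)}$ denotes the $p$-local integers. Let $R=\mathbb{Z}_{(p)}[\mathbb{Z}_{(p)}^\times]$ be the group ring of the units of $\mathbb{Z}_{(p)}$, writing $\Psi^j\in R$ for $j\in\mathbb{Z}_{(p)}^\times$. Fix an integer $q$ primitive modulo $p^2$; put $q_i=q^{(-1)^i\lfloor i/2\rfloor}$, $\Theta_n(X)=\prod_{i=1}^n(X-q_i)$ and $\Phi_n=\Theta_n(\Psi^q)\in R$. A Bousfield module is an $R$-module $M$ such that for each $x\in M$: (a) $Rx$ is finitely generated over $\mathbb{Z}_{(p)}$; (b) for each $j\in\mathbb{Z}_{(p)}^\times$, $\Psi^j$ acts on $Rx\otimes\mathbb{Q}$ by a diagonalisable matrix whose eigenvalues are integer powers of $j$; (c) for each $m\ge1$ the action of $\mathbb{Z}_{(p)}^\times$ on $Rx/p^mRx$ factors through $\mathbb{Z}_{(p)}^\times\to(\mathbb{Z}/p^k\mathbb{Z})^\times$ for sufficiently large $k$. *)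

From HB Require Import structures.
From mathcomp Require Import all_boot all_order all_algebra.
Set Implicit Arguments. Unset Strict Implicit. Unset Printing Implicit Defensive.
Import Order.TTheory GRing.Theory Num.Theory.
Local Open Scope ring_scope.

Lemma den_dvd (r : rat) (d : int) : r * d%:~R \is a Num.int -> (denq r %| d)%Z.
Proof.
move=> /numqK Hc; set c := numq _ in Hc.
have E : (numq r * d)%:~R = (c * denq r)%:~R :> rat.
  by rewrite !intrM Hc numqE mulrAC.
have E' : numq r * d = c * denq r by apply: (intr_inj E).
have cop : coprimez (denq r) (numq r) by rewrite coprimez_sym coprimezE coprime_num_den.
by rewrite -(Gauss_dvdzr _ cop) E' dvdz_mull.
Qed.

Definition plocal (p : nat) : pred rat := fun r => coprime p `|denq r|%N.

Lemma plocal_dvd p r (d : int) : (denq r %| d)%Z -> coprime p `|d|%N -> plocal p r.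
Proof. by move=> H1 H2; apply: coprime_dvdr H2. Qed.

Lemma mulden_int (x : rat) : x * (denq x)%:~R \is a Num.int.
Proof. by rewrite -numqE intr_int. Qed.

Fact plocal_subring p : subring_closed (plocal p).
Proof.
split; first exact: coprimen1.
- move=> x y Hx Hy; apply: (@plocal_dvd _ _ (denq x * denq y)).
    apply: den_dvd; rewrite intrM mulrBl.
    apply: rpredB; first by rewrite mulrA rpredM ?mulden_int ?intr_int.
    by rewrite mulrCA rpredM ?mulden_int ?intr_int.
  by rewrite abszM coprimeMr; apply/andP; split.
- move=> x y Hx Hy; apply: (@plocal_dvd _ _ (denq x * denq y)).
    apply: den_dvd; rewrite intrM mulrACA.
    by rewrite rpredM ?mulden_int.
  by rewrite abszM coprimeMr; apply/andP; split.
Qed.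

HB.instance Definition _ p := GRing.isSubringClosed.Build rat (plocal p) (plocal_subring p).

Record Zloc (p : nat) := ZLoc { zval : rat; zvalP : plocal p zval }.
HB.instance Definition _ p := [isSub for @zval p].
HB.instance Definition _ p := [Choice of Zloc p by <:].
HB.instance Definition _ p := [SubChoice_isSubComNzRing of Zloc p by <:].

Section Units.
Variable p : nat.
Implicit Types x y : Zloc p.

Definition zunit : {pred Zloc p} :=
  fun x => (zval x != 0) && coprime p `|numq (zval x)|%N.

Lemma plocalV (r : rat) : r != 0 -> coprime p `|numq r|%N -> plocal p r^-1.
Proof.
move=> r0 Hn; apply: (@plocal_dvd _ _ (numq r)) => //; apply: den_dvd.
by rewrite numqE mulrA mulVf // mul1r intr_int.
Qed.

Definition zinv x : Zloc p :=
  if zunit x then insubd x (zval x)^-1 else x.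

Lemma zmulVx : {in zunit, left_inverse 1 zinv *%R}.
Proof.
move=> x /[dup] Ux /andP[x0 Hn]; rewrite /zinv (_ : zunit x = true) //; apply: val_inj.
by rewrite /= insubdK ?mulVf //; apply: plocalV.
Qed.

Lemma zunitPl x y : y * x = 1 -> zunit x.
Proof.
move=> /(congr1 (@zval p)) /= Hyx.
have x0 : zval x != 0 by apply/eqP=> x0; move: Hyx; rewrite x0 mulr0 => /eqP; rewrite eq_sym oner_eq0.
rewrite /zunit x0 /=.
have E : (numq (zval y) * numq (zval x))%:~R = (denq (zval y) * denq (zval x))%:~R :> rat.
  by rewrite !intrM !numqE mulrACA Hyx mul1r.
have E' := congr1 absz (intr_inj E); rewrite !abszM in E'.
have : coprime p (`|denq (zval y)| * `|denq (zval x)|)%N.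
  by rewrite coprimeMr; apply/andP; split; apply: zvalP.
by rewrite -E' coprimeMr => /andP[_ ->].
Qed.

Lemma zinv_out : {in [predC zunit], zinv =1 id}.
Proof. by move=> x; rewrite inE /zinv /= => /negbTE H; rewrite [zunit x]H. Qed.

End Units.

HB.instance Definition _ p := GRing.ComNzRing_hasMulInverse.Build (Zloc p)
  (@zmulVx p) (@zunitPl p) (@zinv_out p).


(* Z_(p) is [Zloc p] (rationals with denominator prime to p); it is a  *)
(* comUnitRingType whose units are exactly Z_(p)^x.  An R-module, for  *)
(* R = Z_(p)[Z_(p)^x], is a Z_(p)-module [M] with an action [Psi j]    *)
(* (j a unit of Z_(p)) of the group Z_(p)^x by Z_(p)-linear maps;      *)
(* the values of [Psi] at non-units are irrelevant (never used).       *)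

Definition Rmodule_action (p : nat) (M : lmodType (Zloc p))
    (Psi : Zloc p -> M -> M) : Prop :=
  [/\ forall j : Zloc p, j \is a GRing.unit ->
        forall (a : Zloc p) (y z : M), Psi j (a *: y + z) = a *: Psi j y + Psi j z,
      forall y : M, Psi 1 y = y &
      forall j k : Zloc p, j \is a GRing.unit -> k \is a GRing.unit ->
        forall y : M, Psi (j * k) y = Psi j (Psi k y)].

(* y \in R x : y = sum_i a_i Psi^{j_i} x, a_i in Z_(p), j_i in Z_(p)^x *)
Definition Rgen (p : nat) (M : lmodType (Zloc p)) (Psi : Zloc p -> M -> M)
    (x y : M) : Prop :=
  exists s : seq (Zloc p * Zloc p),
    all (fun c => c.2 \is a GRing.unit) s /\ y = \sum_(c <- s) c.1 *: Psi c.2 x.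

(* y is a torsion element, i.e. y (x) 1 = 0 in M (x) Q *)
Definition torsion (p : nat) (M : lmodType (Zloc p)) (y : M) : Prop :=
  exists n : nat, (0 < n)%N /\ y *+ n = 0.

Definition fg_Rx (p : nat) (M : lmodType (Zloc p)) (Psi : Zloc p -> M -> M)
    (x : M) : Prop :=
  exists gs : seq M, (forall g, g \in gs -> Rgen Psi x g) /\
    forall y, Rgen Psi x y ->
      exists c : 'I_(size gs) -> Zloc p, y = \sum_(i < size gs) c i *: gs`_i.

(* (b) Psi^j acts diagonalisably on R x (x) Q with eigenvalues j^e, e in Z:
   R x (x) Q is spanned (over Q) by eigenvectors z (x) 1 (z in R x) with
   Psi^j (z (x) 1) = j^e (z (x) 1).  Clearing denominators, this says: every
   y in R x has a positive multiple n y which, modulo torsion, is a sum of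
   elements z of R x with Psi^j z - j^e z torsion. *)
Definition diag_Rx (p : nat) (M : lmodType (Zloc p)) (Psi : Zloc p -> M -> M)
    (x : M) (j : Zloc p) : Prop :=
  forall y, Rgen Psi x y ->
    exists n : nat, (0 < n)%N /\
    exists zs : seq (M * int),
      (forall z, z \in zs -> Rgen Psi x z.1 /\ torsion (Psi j z.1 - j ^ z.2 *: z.1))
      /\ torsion (y *+ n - \sum_(z <- zs) z.1).

(* (c) for each m >= 1 the action on R x / p^m R x factors through
   Z_(p)^x -> (Z/p^k)^x for some k *)
Definition factors_Rx (p : nat) (M : lmodType (Zloc p)) (Psi : Zloc p -> M -> M)
    (x : M) : Prop :=
  forall m : nat, (1 <= m)%N -> exists k : nat,
    forall j j' : Zloc p, j \is a GRing.unit -> j' \is a GRing.unit ->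
      (exists c : Zloc p, j - j' = (p ^ k)%:R * c) ->
      forall y, Rgen Psi x y ->
        exists w, Rgen Psi x w /\ Psi j y - Psi j' y = (p ^ m)%:R *: w.

Definition bousfield (p : nat) (M : lmodType (Zloc p)) (Psi : Zloc p -> M -> M)
    : Prop :=
  Rmodule_action Psi /\
  forall x : M,
    [/\ fg_Rx Psi x,
        forall j : Zloc p, j \is a GRing.unit -> diag_Rx Psi x j &
        factors_Rx Psi x].

Definition primitive_mod (q : int) (m : nat) : Prop :=
  coprimez q m /\
  forall k : nat, (0 < k)%N -> (q ^+ k == 1 %[mod m])%Z -> (totient m <= k)%N.

Definition qi (p : nat) (q : int) (i : nat) : Zloc p :=
  (q%:~R : Zloc p) ^ ((-1) ^+ i * (i./2)%:Z).

Fixpoint Phi (p : nat) (M : lmodType (Zloc p)) (Psi : Zloc p -> M -> M)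
    (q : int) (n : nat) (y : M) : M :=
  match n with
  | 0 => y
  | n'.+1 => let z := Phi Psi q n' y in Psi (q%:~R) z - qi p q n'.+1 *: z
  end.

From HB Require Import structures.
From mathcomp Require Import all_boot all_order all_algebra all_field zify.
Import Order.TTheory GRing.Theory Num.Theory.
Set Implicit Arguments. Unset Strict Implicit. Unset Printing Implicit Defensive.
Local Open Scope ring_scope.

(* Let T = Psi^q.  Each q_i is congruent mod p to an integer power of q, so
   Phi_n x is congruent mod p R x to Theta(T) x for an integer polynomial Theta
   which, reduced mod p, contains the factors X - q^m for 1 <= m <= n/2.  Since
   q is a primitive root mod p, once n >= p^(k+1) (p-1) these factors contain
   every (p-1)-th root of unity p^k times, so Theta is divisible mod p by
   (X^(p-1) - 1)^(p^k) = X^N - 1, where N = p^k (p-1).  Lifting the exponent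
   gives q^N = 1 mod p^(k+1); so when p^k is the modulus that condition (c)
   provides for m = 1, T^N x - x lies in p R x. *)

Section PrimeModulus.
Variable p : nat.
Hypothesis p_pr : prime p.

Lemma Fp_intr_eq0 (z : int) : ((z%:~R : 'F_p) == 0) = (p%:Z %| z)%Z.
Proof.
have p_char := pchar_Fp p_pr.
case: z => n; first by rewrite /= -pmulrn -(dvdn_pcharf p_char) dvdzE.
by rewrite NegzE rmorphN /= oppr_eq0 -pmulrn -(dvdn_pcharf p_char) dvdzE abszN.
Qed.

Lemma Fp_intr_neq0 (z : int) : coprime `|z| p -> (z%:~R : 'F_p) != 0.
Proof. by rewrite Fp_intr_eq0 dvdzE /= -prime_coprime // coprime_sym. Qed.

Lemma Fp_expf_pred (a : 'F_p) : a != 0 -> a ^+ p.-1 = 1.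
Proof.
move=> a0; apply: (mulfI a0); rewrite mulr1 -exprS prednK ?prime_gt0 //.
by have := expf_card a; rewrite card_Fp.
Qed.

Lemma dvdz_expp_sub1 (a : int) j :
  (p%:Z ^+ j.+1 %| a - 1)%Z -> (p%:Z ^+ j.+2 %| a ^+ p - 1)%Z.
Proof.
move=> dvd_a1; rewrite -(expr1n int p) subrXX exprSr dvdz_mul //.
have a1 : (a%:~R : 'F_p) = 1.
  have : ((a - 1)%:~R : 'F_p) == 0.
    by rewrite Fp_intr_eq0 (dvdz_trans _ dvd_a1) // exprS dvdz_mulr.
  by rewrite rmorphB rmorph1 subr_eq0 => /eqP.
rewrite -Fp_intr_eq0 rmorph_sum /=.
under eq_bigr => i _ do rewrite rmorphM /= !rmorphXn /= a1 rmorph1 !expr1n mulr1.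
by rewrite sumr_const card_ord pchar_Fp_0.
Qed.

Lemma dvdz_Fermat_lift (q : int) j : coprime `|q| p ->
  (p%:Z ^+ j.+1 %| q ^+ (p.-1 * p ^ j) - 1)%Z.
Proof.
move=> qp; elim: j => [|j IH]; last by rewrite expnSr mulnA exprM dvdz_expp_sub1.
rewrite expn0 muln1 expr1 -Fp_intr_eq0 rmorphB rmorphXn rmorph1 /=.
by rewrite Fp_expf_pred ?subrr ?Fp_intr_neq0.
Qed.

Lemma primitive_mod_coprime (q : int) : primitive_mod q (p ^ 2) -> coprime `|q| p.
Proof. by case=> qp2 _; rewrite -(coprime_pexpr _ _ (isT : 0 < 2)%N). Qed.

Lemma primitive_mod_prim_root (q : int) : primitive_mod q (p ^ 2) ->
  (p.-1).-primitive_root (q%:~R : 'F_p).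
Proof.
move=> /[dup] /primitive_mod_coprime qp [_ q_order].
have p1_gt0 : (0 < p.-1)%N by rewrite -ltnS prednK ?prime_gt1 ?prime_gt0.
have [d prim_d d_dvd] := prim_order_exists p1_gt0 (Fp_expf_pred (Fp_intr_neq0 qp)).
suff d_ge : (p.-1 <= d)%N.
  by have /eqP -> : p.-1 == d by rewrite eqn_leq d_ge dvdn_leq.
have d_gt0 := prim_order_gt0 prim_d.
have : (p%:Z ^+ 2 %| (q ^+ d) ^+ p - 1)%Z.
  apply: (@dvdz_expp_sub1 _ 0); rewrite expr1 -Fp_intr_eq0 rmorphB rmorphXn rmorph1 /=.
  by rewrite (prim_expr_order prim_d) subrr.
have -> : p%:Z ^+ 2 = (p ^ 2)%N by rewrite expnS expn1 PoszM expr2.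
rewrite -exprM -eqz_mod_dvd => /q_order.
rewrite muln_gt0 d_gt0 prime_gt0 // totient_pfactor // expn1 leq_pmul2r ?prime_gt0 //.
by apply.
Qed.

End PrimeModulus.

Section PrimitiveRootProduct.
Variables (F : fieldType) (n : nat) (z : F).
Hypothesis prim_z : n.-primitive_root z.

Lemma prod_XsubC_prim_root_succ :
  \prod_(1 <= i < n.+1) ('X - (z ^+ i)%:P) = 'X^n - 1.
Proof.
rewrite -(factor_Xn_sub_1 prim_z) big_add1 /=.
have [m n_eq] : exists m, n = m.+1 by exists n.-1; rewrite prednK ?(prim_order_gt0 prim_z).
rewrite n_eq big_nat_recr // big_nat_recl // mulrC -n_eq.
by rewrite (prim_expr_order prim_z) expr0.
Qed.

Lemma prod_XsubC_prim_root_pchar p k : p \in [pchar F] ->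
  \prod_(1 <= i < (n * p ^ k).+1) ('X - (z ^+ i)%:P) = 'X^(n * p ^ k) - 1.
Proof.
move=> p_char.
have periodic m : \prod_(1 <= i < (n * m).+1) ('X - (z ^+ i)%:P) = ('X^n - 1) ^+ m.
  elim: m => [|m IH]; first by rewrite muln0 big_geq.
  rewrite mulnS addnC (@big_cat_nat _ _ _ (n * m).+1) ?leq_addr //= IH exprS mulrC.
  rewrite -add1n big_addn -addnS addKn -prod_XsubC_prim_root_succ.
  congr (_ * _); apply: eq_bigr => i _.
  by rewrite exprD exprM (prim_expr_order prim_z) expr1n mulr1.
have p_char_poly : p \in [pchar {poly F}] by rewrite pchar_poly.
have p_nat : [pchar {poly F}].-nat (p ^ k)%N.
  by rewrite (eq_pnat _ (pcharf_eq p_char_poly)) pnatX pnat_id // (pcharf_prime p_char).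
by rewrite periodic exprDn_pchar // exprNn_pchar // expr1n -exprM.
Qed.

End PrimitiveRootProduct.

(* [q ^+ qexp p i] is congruent to [q_i] mod p: by Fermat, q^(-m) = q^(m(p-2)) mod p. *)
Definition qexp (p i : nat) : nat := if odd i then (i./2 * (p - 2))%N else i./2.

Definition Theta_int (p : nat) (q : int) (n : nat) : {poly int} :=
  \prod_(1 <= i < n.+1) ('X - (q ^+ qexp p i)%:P).

Lemma map_Theta_int (R : nzRingType) p q n :
  map_poly (intr : int -> R) (Theta_int p q n) =
  \prod_(1 <= i < n.+1) ('X - ((q%:~R : R) ^+ qexp p i)%:P).
Proof.
rewrite rmorph_prod; apply: eq_bigr => i _.
by rewrite rmorphB /= map_polyX map_polyC /= rmorphXn.
Qed.

Lemma prod_XsubC_dvd_Theta_double (F : fieldType) p (g : F) k :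
  \prod_(1 <= m < k.+1) ('X - (g ^+ m)%:P) %|
  \prod_(1 <= i < k.*2.+1) ('X - (g ^+ qexp p i)%:P).
Proof.
elim: k => [|k IH]; first by rewrite !big_geq.
rewrite doubleS (big_nat_recr k.+1) // (big_nat_recr k.*2.+2) // (big_nat_recr k.*2.+1) //=.
rewrite -mulrA dvdp_mul ?dvdp_mull //.
by rewrite /qexp -doubleS odd_double half_double.
Qed.

Lemma Theta_int_modp p q k n : prime p -> primitive_mod q (p ^ 2) ->
  (p ^ k.+1 * (p - 1) <= n)%N ->
  exists A B : {poly int}, Theta_int p q n = A * ('X^(p.-1 * p ^ k) - 1) + p%:Z *: B.
Proof.
move=> p_pr q_prim n_ge; set N := (p.-1 * p ^ k)%N.
have N2_le : (N.*2 <= n)%N.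
  apply: leq_trans n_ge; have := prime_gt1 p_pr; rewrite /N expnS subn1 -muln2; nia.
have dvd : ('X^N - 1 : {poly 'F_p}) %| map_poly intr (Theta_int p q n).
  rewrite map_Theta_int.
  rewrite -(prod_XsubC_prim_root_pchar (primitive_mod_prim_root p_pr q_prim) k (pchar_Fp p_pr)).
  apply: dvdp_trans (prod_XsubC_dvd_Theta_double p _ N) _.
  by rewrite [X in _ %| X](@big_cat_nat _ _ _ N.*2.+1) ?dvdp_mulIl.
have [Ab Ab_eq] := dvdpP _ _ dvd.
have [A A_eq] : exists A : {poly int}, map_poly intr A = Ab.
  exists (\poly_(i < size Ab) (nat_of_ord Ab`_i)%:Z); apply/polyP => i.
  rewrite coef_map coef_poly /=; case: ltnP => i_lt; last by rewrite nth_default.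
  by rewrite -pmulrn natr_Zp.
set D := Theta_int p q n - A * ('X^N - 1).
have D_p : D \is a polyOver (dvdz p).
  apply/polyOverP => i; rewrite -(Fp_intr_eq0 p_pr) -coef_map.
  by rewrite rmorphB rmorphM /= A_eq rmorphB /= map_polyXn rmorph1 -Ab_eq subrr coef0.
by exists A, (map_poly (divz^~ p) D); rewrite map_poly_divzK // addrC subrK.
Qed.

Lemma intr_dvdz (R : comNzRingType) (d a : int) :
  (d %| a)%Z -> exists c : R, a%:~R = d%:~R * c.
Proof. by case/dvdzP=> c ->; exists c%:~R; rewrite intrM mulrC. Qed.

Lemma Zloc_intr_unit p (z : int) : (1 < p)%N -> coprime `|z| p ->
  (z%:~R : Zloc p) \is a GRing.unit.
Proof.
move=> p_gt1 zp; rewrite qualifE /= /zunit.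
have -> : zval (z%:~R : Zloc p) = z%:~R := rmorph_int (val : Zloc p -> rat) z.
rewrite numq_int intr_eq0 coprime_sym zp andbT.
by apply: contraTneq zp => ->; rewrite /coprime gcd0n gtn_eqF.
Qed.

Lemma qi_modp p q i : prime p -> coprime `|q| p ->
  exists d : Zloc p, qi p q i = (q ^+ qexp p i)%:~R + p%:R * d.
Proof.
move=> p_pr qp; rewrite /qi /qexp -signr_odd; set u : Zloc p := q%:~R.
case: (odd i); last by exists 0; rewrite mul1r mulr0 addr0 rmorphXn.
set m := i./2; rewrite expr1 mulN1r -invr_expz /= rmorphXn -/u.
have v_unit : u ^+ m \is a GRing.unit by rewrite unitrX ?Zloc_intr_unit ?prime_gt1.
have [t Ht] : exists t : Zloc p, u ^+ (p.-1 * m) = 1 + p%:R * t.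
  have Fermat : (p%:Z %| q ^+ (p.-1 * m) - 1)%Z.
    rewrite exprM -(expr1n int m) subrXX dvdz_mulr //.
    by have := dvdz_Fermat_lift p_pr 0 qp; rewrite expn0 muln1 expr1.
  have [t Ht] := intr_dvdz (Zloc p) Fermat.
  by exists t; rewrite -rmorphXn -Ht rmorphB rmorph1 addrC subrK.
have split_exp : u ^+ (m * (p - 2)) = u ^+ (p.-1 * m) * (u ^+ m)^-1.
  apply: (mulIr v_unit); rewrite mulrVK // -exprD.
  by congr (u ^+ _); have := prime_gt1 p_pr; nia.
exists (- (t * (u ^+ m)^-1)); rewrite split_exp Ht.
by rewrite mulrDl mul1r mulrN -mulrA addrK.
Qed.

Section PolyAction.
Variables (V : zmodType) (T : {additive V -> V}).

Definition poly_act (P : {poly int}) (v : V) : V :=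
  \sum_(i < size P) iter i T v *~ P`_i.

Lemma iter_is_zmod_morphism n : zmod_morphism (iter n T).
Proof. by elim: n => // n IH u v; rewrite /= IH raddfB. Qed.

Lemma poly_act_is_zmod_morphism (P : {poly int}) : zmod_morphism (poly_act P).
Proof.
move=> u v; rewrite /poly_act -sumrB; apply: eq_bigr => i _.
by rewrite iter_is_zmod_morphism mulrzBl.
Qed.

HB.instance Definition _ (P : {poly int}) :=
  GRing.isZmodMorphism.Build V V (poly_act P) (poly_act_is_zmod_morphism P).

Lemma poly_act_widen (P : {poly int}) (v : V) n : (size P <= n)%N ->
  poly_act P v = \sum_(i < n) iter i T v *~ P`_i.
Proof.
move=> le_Pn; rewrite /poly_act (big_ord_widen n (fun i => iter i T v *~ P`_i) le_Pn).
rewrite big_mkcond; apply: eq_bigr => i _; case: ltnP => // le_P_i.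
by rewrite nth_default ?mulr0z.
Qed.

Lemma poly_actDl (P Q : {poly int}) (v : V) :
  poly_act (P + Q) v = poly_act P v + poly_act Q v.
Proof.
rewrite !(@poly_act_widen _ v (maxn (size P) (size Q))) ?leq_maxl ?leq_maxr ?size_polyD //.
by rewrite -big_split; apply: eq_bigr => i _; rewrite coefD mulrzDr.
Qed.

Lemma poly_actZl (c : int) (P : {poly int}) (v : V) :
  poly_act (c *: P) v = poly_act P v *~ c.
Proof.
rewrite (@poly_act_widen _ v (size P)) ?size_scale_leq // mulrz_suml.
by apply: eq_bigr => i _; rewrite coefZ mulrzA_C.
Qed.

Lemma poly_actC (c : int) (v : V) : poly_act c%:P v = v *~ c.
Proof. by rewrite (@poly_act_widen _ v 1) ?size_polyC_leq1 // big_ord1 coefC. Qed.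

Lemma poly_act1 (v : V) : poly_act 1 v = v.
Proof. by rewrite poly_actC. Qed.

Lemma poly_act_mulX (P : {poly int}) (v : V) : poly_act (P * 'X) v = poly_act P (T v).
Proof.
have [->|P0] := eqVneq P 0; first by rewrite mul0r /poly_act size_poly0 !big_ord0.
rewrite /poly_act size_mulX // big_ord_recl coefMX /= mulr0z add0r.
by apply: eq_bigr => i _; rewrite coefMX /= -iterSr.
Qed.

Lemma poly_act_comm (P : {poly int}) (v : V) : T (poly_act P v) = poly_act P (T v).
Proof.
rewrite raddf_sum; apply: eq_bigr => i _.
by rewrite raddfMz -iterS iterSr.
Qed.

Lemma poly_actM (P Q : {poly int}) (v : V) :
  poly_act (P * Q) v = poly_act P (poly_act Q v).
Proof.
elim/poly_ind: P v => [|P c IH] v; first by rewrite mul0r /poly_act size_poly0 !big_ord0.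
rewrite mulrDl -mulrA (mulrC 'X) mulrA poly_actDl poly_act_mulX IH mul_polyC poly_actZl.
by rewrite poly_actDl poly_act_mulX poly_actC poly_act_comm.
Qed.

Lemma poly_actXn n (v : V) : poly_act 'X^n v = iter n T v.
Proof.
elim: n v => [|n IH] v; first by rewrite expr0 poly_act1.
by rewrite exprSr poly_act_mulX IH iterSr.
Qed.

Lemma poly_act_XsubC (c : int) (v : V) : poly_act ('X - c%:P) v = T v - v *~ c.
Proof.
by rewrite poly_actDl -scaleN1r poly_actZl poly_actC -['X]expr1 poly_actXn mulrN1z.
Qed.

Lemma poly_act_Xn_sub1 n (v : V) : poly_act ('X^n - 1) v = iter n T v - v.
Proof. by rewrite poly_actDl -scaleN1r poly_actZl poly_act1 poly_actXn mulrN1z. Qed.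

End PolyAction.

Section BousfieldAction.
Variables (p : nat) (M : lmodType (Zloc p)) (Psi : Zloc p -> M -> M) (x : M).
Hypothesis Psi_act : Rmodule_action Psi.

Lemma Psi_is_zmod_morphism j : j \is a GRing.unit -> zmod_morphism (Psi j).
Proof.
case: Psi_act => Psi_lin _ _ j_unit u v.
by rewrite -[u - v]addrC -scaleN1r Psi_lin // scaleN1r addrC.
Qed.

Definition Psi_additive j (j_unit : j \is a GRing.unit) : {additive M -> M} :=
  HB.pack (Psi j) (GRing.isZmodMorphism.Build _ _ (Psi j) (Psi_is_zmod_morphism j_unit)).

Lemma PsiZ j a y : j \is a GRing.unit -> Psi j (a *: y) = a *: Psi j y.
Proof.
case: Psi_act => Psi_lin _ _ j_unit.
have Psi0 : Psi j 0 = 0 := raddf0 (Psi_additive j_unit).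
by have := Psi_lin j j_unit a y 0; rewrite !addr0 Psi0 addr0.
Qed.

Lemma Rgen_self : Rgen Psi x x.
Proof.
case: Psi_act => _ Psi1 _.
by exists [:: (1, 1)]; rewrite /= unitr1 big_seq1 scale1r Psi1.
Qed.

Lemma Rgen0 : Rgen Psi x 0.
Proof. by exists [::]; rewrite big_nil. Qed.

Lemma RgenD y z : Rgen Psi x y -> Rgen Psi x z -> Rgen Psi x (y + z).
Proof.
move=> [s1 [s1_unit ->]] [s2 [s2_unit ->]]; exists (s1 ++ s2).
by rewrite all_cat s1_unit s2_unit big_cat.
Qed.

Lemma RgenZ a y : Rgen Psi x y -> Rgen Psi x (a *: y).
Proof.
move=> [s [s_unit ->]]; exists [seq (a * c.1, c.2) | c <- s]; split.
  by rewrite all_map; apply: sub_all s_unit => c.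
by rewrite big_map scaler_sumr; apply: eq_bigr => c _; rewrite scalerA.
Qed.

Lemma RgenB y z : Rgen Psi x y -> Rgen Psi x z -> Rgen Psi x (y - z).
Proof. by move=> Ry Rz; rewrite -scaleN1r; apply: RgenD => //; apply: RgenZ. Qed.

Lemma Rgen_Psi j y : j \is a GRing.unit -> Rgen Psi x y -> Rgen Psi x (Psi j y).
Proof.
case: Psi_act => _ _ PsiM j_unit [s [s_unit ->]].
exists [seq (c.1, j * c.2) | c <- s]; split.
  by rewrite all_map; apply: sub_all s_unit => c /= c_unit; rewrite unitrM j_unit.
have PsiD := raddfD (Psi_additive j_unit); have Psi0 := raddf0 (Psi_additive j_unit).
rewrite big_map (big_morph (Psi j) PsiD Psi0) big_seq [RHS]big_seq.
apply: eq_bigr => c /(allP s_unit) c_unit.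
by rewrite PsiZ // PsiM.
Qed.

Lemma Rgen_poly_act j (j_unit : j \is a GRing.unit) P y :
  Rgen Psi x y -> Rgen Psi x (poly_act (Psi_additive j_unit) P y).
Proof.
move=> Ry; apply: big_ind => [|u v|i _]; [exact: Rgen0 | exact: RgenD |].
rewrite -scaler_int; apply: RgenZ.
by elim: (nat_of_ord i) => //= n; apply: Rgen_Psi.
Qed.

Definition pRgen (y : M) : Prop := exists w, Rgen Psi x w /\ y = p%:R *: w.

Lemma pRgenD y z : pRgen y -> pRgen z -> pRgen (y + z).
Proof.
by move=> [u [Ru ->]] [v [Rv ->]]; exists (u + v); rewrite scalerDr; split; [apply: RgenD|].
Qed.

Lemma pRgenB y z : pRgen y -> pRgen z -> pRgen (y - z).
Proof.
by move=> [u [Ru ->]] [v [Rv ->]]; exists (u - v); rewrite scalerBr; split; [apply: RgenB|].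
Qed.

Lemma pRgen_scale d y : Rgen Psi x y -> pRgen ((p%:R * d) *: y).
Proof. by move=> Ry; exists (d *: y); rewrite scalerA; split; [apply: RgenZ|]. Qed.

Lemma pRgen_poly_act j (j_unit : j \is a GRing.unit) P y :
  pRgen y -> pRgen (poly_act (Psi_additive j_unit) P y).
Proof.
move=> [w [Rw ->]]; exists (poly_act (Psi_additive j_unit) P w); split.
  exact: Rgen_poly_act.
by rewrite !scaler_nat raddfMn.
Qed.

Lemma factors_Rx_modp : factors_Rx Psi x -> exists k, forall j j',
  j \is a GRing.unit -> j' \is a GRing.unit ->
  (exists c, j - j' = (p ^ k)%:R * c) ->
  forall y, Rgen Psi x y -> pRgen (Psi j y - Psi j' y).
Proof.
move=> /(_ 1%N (leqnn 1)) [k factors_k]; exists k => j j' j_unit j'_unit jj' y Ry.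
by have [w [Rw ->]] := factors_k j j' j_unit j'_unit jj' y Ry; exists w; rewrite expn1.
Qed.

Section PhiModp.
Variable q : int.
Hypothesis q_unit : (q%:~R : Zloc p) \is a GRing.unit.
Let T := Psi_additive q_unit.

Lemma Psi_exprn n y : Psi ((q%:~R : Zloc p) ^+ n) y = iter n T y.
Proof.
case: Psi_act => _ Psi1 PsiM.
elim: n y => [|n IH] y; first by rewrite expr0 Psi1.
by rewrite exprS PsiM ?unitrX // IH -iterS.
Qed.

Lemma Rgen_Phi n : Rgen Psi x (Phi Psi q n x).
Proof.
elim: n => [|n IH] /=; first exact: Rgen_self.
by apply: RgenB; [apply: Rgen_Psi | apply: RgenZ].
Qed.

Hypothesis qi_congr :
  forall i, exists d : Zloc p, qi p q i = (q ^+ qexp p i)%:~R + p%:R * d.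

Lemma pRgen_Phi_sub_Theta_int n : pRgen (Phi Psi q n x - poly_act T (Theta_int p q n) x).
Proof.
elim: n => [|n IH].
  by exists 0; rewrite /Theta_int big_geq // poly_act1 subrr scaler0; split; [apply: Rgen0|].
have [d qi_eq] := qi_congr n.+1.
rewrite /= qi_eq /Theta_int big_nat_recr //= -/(Theta_int p q n).
rewrite [Theta_int p q n * _]mulrC poly_actM poly_act_XsubC.
set c := q ^+ qexp p n.+1; set Phin := Phi Psi q n x; set Thn := poly_act T _ x.
have -> : Psi q%:~R Phin - (c%:~R + p%:R * d) *: Phin - (T Thn - Thn *~ c) =
          poly_act T ('X - c%:P) (Phin - Thn) - (p%:R * d) *: Phin.
  change (Psi q%:~R Phin) with (T Phin).
  rewrite poly_act_XsubC (raddfB T) scalerDl scaler_int mulrzBl !opprD !opprK !addrA.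
  by rewrite [RHS]addrAC; congr (_ + _); rewrite [LHS]addrAC [in LHS](addrAC (T Phin)).
by apply: pRgenB; [apply: pRgen_poly_act | apply: pRgen_scale; apply: Rgen_Phi].
Qed.

Lemma pRgen_Phi n N (A B : {poly int}) :
  Theta_int p q n = A * ('X^N - 1) + p%:Z *: B ->
  pRgen (Psi ((q%:~R : Zloc p) ^+ N) x - x) -> pRgen (Phi Psi q n x).
Proof.
rewrite Psi_exprn => Theta_eq TN_x.
rewrite -(subrK (poly_act T (Theta_int p q n) x) (Phi Psi q n x)).
apply: pRgenD (pRgen_Phi_sub_Theta_int n) _.
rewrite Theta_eq poly_actDl poly_actM poly_act_Xn_sub1 poly_actZl.
apply: pRgenD (pRgen_poly_act _ _ TN_x) _.
exists (poly_act T B x); rewrite -scaler_int; split=> //.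
exact: Rgen_poly_act Rgen_self.
Qed.

End PhiModp.
End BousfieldAction.

Theorem lemma4p3 (p : nat) (q : int) (M : lmodType (Zloc p))
    (Psi : Zloc p -> M -> M) (x : M) :
  prime p -> odd p -> primitive_mod q (p ^ 2) -> bousfield Psi ->
  exists k : nat, (1 <= k)%N /\
    forall n : nat, (p ^ k * (p - 1) <= n)%N ->
      exists w : M, Rgen Psi x w /\ Phi Psi q n x = p%:R *: w.
Proof.
move=> p_pr _ q_prim [Psi_act Bx].
have [_ _ /factors_Rx_modp [k factors_k]] := Bx x.
have qp := primitive_mod_coprime q_prim.
have q_unit := Zloc_intr_unit (prime_gt1 p_pr) qp.
exists k.+1; split=> // n n_ge.
have [A [B Theta_eq]] := Theta_int_modp p_pr q_prim n_ge.
apply: (pRgen_Phi Psi_act q_unit (fun i => qi_modp i p_pr qp) Theta_eq).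
have [_ Psi1 _] := Psi_act.
have [c qN_eq] := intr_dvdz (Zloc p) (dvdz_Fermat_lift p_pr k qp).
rewrite -[X in _ - X]Psi1; apply: factors_k; rewrite ?unitrX ?unitr1 //.
  exists (p%:R * c); rewrite mulrA -natrM -expnSr natrX.
  by move: qN_eq; rewrite rmorphB rmorph1 !rmorphXn /= => ->.
exact: Rgen_self.
Qed.
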